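(* Let $E$ be a set and $T$ a set of clauses $X\Rightarrow Y$ ($X,Y\subseteq E$) that is rooted, i.e. no clause of the form $\emptyset\Rightarrow Y$ is a logical consequence of $T$. Define the Petri net $\mathcal{N}(T)$ as follows: its transitions are the elements of $E$; for each $e\in E$ there is a place containing one initial token, with no incoming arcs and a single outgoing arc (of weight 1) to $e$; and for each clause $(X\Rightarrow Y)\in T$ with $X$ finite there is a place with an arc of weight 1 to each transition in $X$, an arc of weight 1 from each transition in $Y$, and $|X|-1$ initial tokens. Then the configurations of $\mathcal{N}(T)$ are exactly the finite models of $T$ (multisets with values in $\{0,1\}$ being identified with sets).
   Context: A clause $X\Rightarrow Y$ stands for $\bigwedge X\Rightarrow\bigvee Y$; a model of $T$ is a set $m\subseteq E$ such that for every clause $X\Rightarrow Y$ in $T$, $X\subseteq m$ implies $Y\cap m\ne\emptyset$; a clause is a logical consequence of $T$ if it holds in every model of $T$. A Petri net is $(S,T,F,I)$ with disjoint sets $S$ (places) and $T$ (transitions), flow function $F:(S\times T\cup T\times S)\to\mathbb{N}$ and initial marking $I:S\to\mathbb{N}$. For a finite multiset $X:T\to\mathbb{N}$ put ${}^\bullet X(s)=\sum_t F(s,t)X(t)$ and $X^\bullet(s)=\sum_t X(t)F(t,s)$. A configuration of the net is a finite multiset $X$ of transitions such that $I-{}^\bullet X+X^\bullet\ge 0$ pointwise. *)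

From HB Require Import structures.
From mathcomp Require Import all_boot all_order all_algebra.
From mathcomp Require Import finmap boolp classical_sets functions cardinality fsbigop.
Set Implicit Arguments. Unset Strict Implicit. Unset Printing Implicit Defensive.
Import Order.TTheory GRing.Theory Num.Theory.
Local Open Scope classical_set_scope.

Definition clause (E : Type) := (set E * set E)%type.

Definition clause_holds (E : Type) (m : set E) (c : clause E) : Prop :=
  c.1 `<=` m -> c.2 `&` m !=set0.

Definition is_model (E : Type) (T : set (clause E)) (m : set E) : Prop :=
  forall c, T c -> clause_holds m c.

Definition consequence (E : Type) (T : set (clause E)) (c : clause E) : Prop :=
  forall m : set E, is_model T m -> clause_holds m c.

Definition rooted (E : Type) (T : set (clause E)) : Prop :=
  forall Y : set E, ~ consequence T (set0, Y).

(* Petri net (S, T, F, I): F restricted to S x T is [pre], to T x S is [post]. *)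
Record petri_net := PetriNet {
  place : Type;
  trans : choiceType;
  pre : place -> trans -> nat;
  post : trans -> place -> nat;
  init : place -> nat
}.

Definition finite_multiset (N : petri_net) (X : trans N -> nat) : Prop :=
  finite_set [set t | X t != 0%N].

Definition preset (N : petri_net) (X : trans N -> nat) (s : place N) : nat :=
  \big[addn/0%N]_(t \in [set: trans N]) (pre s t * X t)%N.
Definition postset (N : petri_net) (X : trans N -> nat) (s : place N) : nat :=
  \big[addn/0%N]_(t \in [set: trans N]) (X t * post t s)%N.

Definition configuration (N : petri_net) (X : trans N -> nat) : Prop :=
  finite_multiset X /\
  forall s : place N,
    (0 <= (init s)%:Z - (preset X s)%:Z + (postset X s)%:Z)%R.

Definition clause_place (E : Type) (T : set (clause E)) :=
  {c : clause E | T c /\ finite_set c.1}.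

Definition NT_place (E : choiceType) (T : set (clause E)) : Type :=
  (E + clause_place T)%type.

Definition NT_pre (E : choiceType) (T : set (clause E))
    (s : NT_place T) (t : E) : nat :=
  match s with
  | inl e => nat_of_bool (e == t)
  | inr c => nat_of_bool (t \in (proj1_sig c).1)
  end.

Definition NT_post (E : choiceType) (T : set (clause E))
    (t : E) (s : NT_place T) : nat :=
  match s with
  | inl _ => 0%N
  | inr c => nat_of_bool (t \in (proj1_sig c).2)
  end.

(* |X| - 1 initial tokens (X is nonempty for rooted T) *)
Definition NT_init (E : choiceType) (T : set (clause E)) (s : NT_place T) : nat :=
  match s with
  | inl _ => 1%N
  | inr c => (#|` fset_set (proj1_sig c).1 | - 1)%N
  end.

Definition NT (E : choiceType) (T : set (clause E)) : petri_net :=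
  @PetriNet (NT_place T) E (@NT_pre E T) (@NT_post E T) (@NT_init E T).

From HB Require Import structures.
From mathcomp Require Import all_boot all_order all_algebra.
From mathcomp Require Import finmap boolp classical_sets functions cardinality fsbigop.
From mathcomp Require Import zify.
Set Implicit Arguments. Unset Strict Implicit. Unset Printing Implicit Defensive.
Local Open Scope classical_set_scope.

(* The place of e holds one token and only e consumes it, so a configuration
   fires every transition at most once: it is the indicator of a finite set m.
   The place of a clause X => Y starts with |X| - 1 tokens, loses |X & m| and
   gains |Y & m|; as X is nonempty (T is rooted), its marking is negative
   exactly when X is included in m and Y misses m, i.e. when m violates the
   clause.  Clauses with an infinite body have no place, but a finite m
   satisfies them vacuously. *)

Lemma tokens_ge0 (k q p : nat) : (0 < k)%N -> (q <= k)%N ->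
  (0 <= (k - 1)%N%:Z - q%:Z + p%:Z)%R <-> (q = k -> 0 < p)%N.
Proof. by move=> k_gt0 q_le_k; split=> [+ qk|]; [rewrite qk|]; lia. Qed.

Lemma sum_le1_count (I : Type) (X : I -> nat) (s : seq I) :
  (forall t, X t <= 1)%N -> \sum_(t <- s) X t = count (fun t => X t != 0%N) s.
Proof.
move=> X_le1; elim: s => [|a s IHs]; first by rewrite big_nil.
by rewrite big_cons IHs /=; have := X_le1 a; case: (X a) => [|[|]].
Qed.

Lemma rooted_clause_body_neq0 (E : Type) (T : set (clause E)) (c : clause E) :
  rooted T -> T c -> c.1 !=set0.
Proof.
move=> rT Tc; apply/set0P/eqP => c1_eq0.
by apply: (rT c.2) => m m_model; have := m_model c Tc; rewrite /clause_holds c1_eq0.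
Qed.

Section PetriNetOfClauses.
Variables (E : choiceType) (T : set (clause E)).
Implicit Types (X : E -> nat) (c : clause_place T).

Local Notation support X := [set t | X t != 0%N].

Lemma mem_support X e : (e \in support X) = (X e != 0%N).
Proof. by apply/idP/idP => [/set_mem | /mem_set]. Qed.

Lemma support_indicator (m : set E) : support (fun e => nat_of_bool (e \in m)) = m.
Proof. by apply/seteqP; split=> t /=; rewrite eqb0 negbK; [move/set_mem | move/mem_set]. Qed.

Lemma preset_NT_elem X e : preset (N:=NT T) X (inl e) = X e.
Proof.
rewrite /preset (fsbigTE [fset e]%fset); last first.
  by move=> t; rewrite inE /= => /negbTE; rewrite eq_sym => ->.
by rewrite big_seq_fset1 /= eqxx mul1n.
Qed.

Lemma postset_NT_elem X e : postset (N:=NT T) X (inl e) = 0%N.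
Proof. by apply: fsbig1 => t _ /=; rewrite muln0. Qed.

Lemma preset_NT_clause X c :
  preset (N:=NT T) X (inr c) = \sum_(t <- fset_set (sval c).1) X t.
Proof.
have finA := proj2 (svalP c).
rewrite /preset (fsbigTE (fset_set (sval c).1)); last first.
  by move=> t; rewrite in_fset_set // => /negbTE /= ->.
by apply: eq_big_seq => t; rewrite in_fset_set //= => ->; rewrite mul1n.
Qed.

Lemma postset_NT_clause_gt0 X c : finite_multiset (N:=NT T) X ->
  (0 < postset (N:=NT T) X (inr c))%N <-> (sval c).2 `&` support X !=set0.
Proof.
move=> finX; rewrite /postset (fsbigTE (fset_set (support X))); last first.
  by move=> t; rewrite in_fset_set // notin_setE /= => /negP; rewrite negbK => /eqP ->.
rewrite lt0n sum_nat_seq_neq0; split.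
  case/hasP => t _ /=; rewrite muln_eq0 negb_or => /andP[Xt]; rewrite eqb0 negbK => Bt.
  by exists t; split => //; apply/set_mem.
case=> t [Bt Xt]; apply/hasP; exists t; first by rewrite in_fset_set // inE.
by rewrite /= mem_set // muln1.
Qed.

Lemma elem_place_tokens_ge0 X e :
  (0 <= (init (inl e : place (NT T)))%:Z - (preset (N:=NT T) X (inl e))%:Z
          + (postset (N:=NT T) X (inl e))%:Z)%R <-> (X e <= 1)%N.
Proof. by rewrite preset_NT_elem postset_NT_elem /=; split; lia. Qed.

Lemma clause_place_tokens_ge0 X c : rooted T -> finite_multiset (N:=NT T) X ->
  (forall t, X t <= 1)%N ->
  (0 <= (init (inr c : place (NT T)))%:Z - (preset (N:=NT T) X (inr c))%:Z
          + (postset (N:=NT T) X (inr c))%:Z)%R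
  <-> clause_holds (support X) (sval c).
Proof.
move=> rT finX X_le1; have [Tc finA] := svalP c.
set A := (sval c).1; have [a Aa] := rooted_clause_body_neq0 rT Tc.
have A_gt0 : (0 < #|` fset_set A|)%N.
  by rewrite cardfs_gt0; apply/fset0Pn; exists a; rewrite in_fset_set // inE.
have count_eq_card : count (fun t => X t != 0%N) (fset_set A) = #|` fset_set A|
    <-> A `<=` support X.
  split=> [/eqP | Asupp].
    by rewrite -all_count => /allP Asupp t At; apply: Asupp; rewrite in_fset_set // inE.
  apply/eqP; rewrite -all_count; apply/allP => t.
  by rewrite in_fset_set // => /set_mem /Asupp.
rewrite preset_NT_clause sum_le1_count //= tokens_ge0 ?count_size //.
by rewrite count_eq_card postset_NT_clause_gt0.
Qed.

End PetriNetOfClauses.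

Theorem mainTheorem5 (E : choiceType) (T : set (clause E)) :
  rooted T ->
  forall X : E -> nat,
    @configuration (NT T) X <->
    exists m : set E,
      finite_set m /\ is_model T m /\ (forall e, X e = nat_of_bool (e \in m)).
Proof.
move=> rT X; split.
- case=> finX marking_ge0.
  have X_le1 e : (X e <= 1)%N by apply/elem_place_tokens_ge0/marking_ge0.
  exists [set t | X t != 0%N]; split=> //; split=> [[A B] Tc /= Asupp | e].
    have finA := sub_finite_set Asupp finX.
    pose c : clause_place T := exist _ (A, B) (conj Tc finA).
    exact: (clause_place_tokens_ge0 c rT finX X_le1).1 (marking_ge0 _) Asupp.
  by rewrite mem_support; have := X_le1 e; case: (X e) => [|[|]].
- case=> m [finm [m_model Xm]].
  have -> : X = fun e => nat_of_bool (e \in m) by apply/funext.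
  have finX : finite_multiset (N:=NT T) (fun e => nat_of_bool (e \in m)).
    by rewrite /finite_multiset support_indicator.
  split=> // [[e | c]]; first by apply/elem_place_tokens_ge0; case: (e \in m).
  apply/clause_place_tokens_ge0 => //; first by move=> e; case: (e \in m).
  by rewrite support_indicator; apply: m_model; case: (svalP c).
Qed.
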